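(* Let $\varphi(x,y)$ be a formula in the language of $\mathbf{A}^{\natural}$ and let $a\in A$. If $\varphi(a^1,a^3)\neq\varphi(a^1,a^1)$, then $\varphi(a^1,a^3)\in A_1\cup A_3\cup A_4$.
   Context: $\mathbf{A}$ is a fixed non-trivial algebra whose set $\mathcal{F}$ of basic operations contains no constant symbols, and $h$ is a unary function on $A$. Construction of $\mathbf{A}^{\natural}$: universe is the disjoint union of eight copies $A_1,\dots,A_8$ of $A$ ($a^i$ is the copy of $a$ in $A_i$); operations: each $n$-ary $f\in\mathcal{F}$ with $f(a_1^{m_1},\dots,a_n^{m_n})=(f^{\mathbf{A}}(a_1,\dots,a_n))^5$; a ternary $\heartsuit$ with $\heartsuit(a^m,b^n,c^k)=a^1$ if $a^m=c^k$, $h(a)^5=b^n$, $m\in\{1,3,4\}$; $=a^2$ if $a^m=c^k$, $h(a)^5=b^n$, $m\in\{2,5,6,7,8\}$; $=a^4$ if $m,k\in\{1,3,4\}$ and ($a^m\ne c^k$ or $h(a)^5\ne b^n$); $=a^7$ if $\{m,k\}\cap\{2,5,6,7,8\}\ne\emptyset$ and ($a^m\ne c^k$ or $h(a)^5\ne b^n$); a unary $\Box$ with $\Box(a^m)=a^m$ for $m\in\{1,2\}$, $a^{m-1}$ for even $m\ge3$, $a^{m+1}$ for odd $m\ge3$. *)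

From mathcomp Require Import all_boot.
Set Implicit Arguments. Unset Strict Implicit. Unset Printing Implicit Defensive.

(* Index of the eight copies A_1, ..., A_8. *)
Inductive idx8 := I1 | I2 | I3 | I4 | I5 | I6 | I7 | I8.

Definition idx8_eqb (m k : idx8) : bool :=
  match m, k with
  | I1, I1 | I2, I2 | I3, I3 | I4, I4 | I5, I5 | I6, I6 | I7, I7 | I8, I8 => true
  | _, _ => false
  end.

Definition in134 (m : idx8) : bool :=
  match m with I1 | I3 | I4 => true | _ => false end.

Section Natural.
Variable A : eqType.
Variable F : Type.
Variable ar : F -> nat.
Variable op : forall f : F, ('I_(ar f) -> A) -> A.
Variable h : A -> A.

(* element a^m of A^natural is the pair (a, m) *)
Definition nat_elt := (A * idx8)%type.

Definition elt_eqb (u v : nat_elt) : bool := (u.1 == v.1) && idx8_eqb u.2 v.2.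

Definition heart (u v w : nat_elt) : nat_elt :=
  let: (a, m) := u in let: (c, k) := w in
  if elt_eqb u w && elt_eqb (h a, I5) v then
    (if in134 m then (a, I1) else (a, I2))
  else if in134 m && in134 k then (a, I4) else (a, I7).

Definition box (u : nat_elt) : nat_elt :=
  let: (a, m) := u in
  match m with
  | I1 => (a, I1) | I2 => (a, I2)
  | I3 => (a, I4) | I4 => (a, I3)
  | I5 => (a, I6) | I6 => (a, I5)
  | I7 => (a, I8) | I8 => (a, I7)
  end.

(* Terms ("formulas") phi(x,y) in the language of A^natural, in two variables:
   Var false = x, Var true = y. *)
Inductive term :=
  | Var of bool
  | App (f : F) of ('I_(ar f) -> term)
  | Heart of term & term & term
  | Box of term.

Fixpoint eval (t : term) (x y : nat_elt) : nat_elt :=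
  match t with
  | Var b => if b then y else x
  | App f args => (op (fun i => (eval (args i) x y).1), I5)
  | Heart t1 t2 t3 => heart (eval t1 x y) (eval t2 x y) (eval t3 x y)
  | Box t1 => box (eval t1 x y)
  end.

End Natural.

From mathcomp Require Import all_boot.
From Stdlib Require Import FunctionalExtensionality.

(* Merging the copies A_1, A_3, A_4 into A_1 is compatible with every basic
   operation of A^natural: the operations of A only read the A-coordinate, and
   for [box] and [heart] it is a finite case check.  Since a^3
   merges to a^1, phi(a^1, a^3) and phi(a^1, a^1) have the same image, and two
   distinct elements with the same image lie in A_1 ∪ A_3 ∪ A_4. *)

Definition merge134 (m : idx8) : idx8 := if in134 m then I1 else m.

Definition merge134_elt {A : eqType} (u : nat_elt A) : nat_elt A :=
  (u.1, merge134 u.2).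

Lemma merge134_heart (A : eqType) (h : A -> A) (u v w : nat_elt A) :
  merge134_elt (heart h u v w)
  = merge134_elt (heart h (merge134_elt u) (merge134_elt v) (merge134_elt w)).
Proof.
case: u v w => [a m] [b n] [c k]; rewrite /heart /elt_eqb /merge134_elt /=.
by case: (a == c); case: (h a == b); case: m; case: n; case: k.
Qed.

Lemma merge134_box (A : eqType) (u : nat_elt A) :
  merge134_elt (box u) = merge134_elt (box (merge134_elt u)).
Proof. by case: u => a []. Qed.

Lemma merge134_eval (A : eqType) (F : Type) (ar : F -> nat)
    (op : forall f : F, ('I_(ar f) -> A) -> A) (h : A -> A)
    (phi : term ar) (x y : nat_elt A) :
  merge134_elt (eval op h phi x y)
  = merge134_elt (eval op h phi (merge134_elt x) (merge134_elt y)).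
Proof.
elim: phi => [[]|f args IHargs|t1 IH1 t2 IH2 t3 IH3|t IH] /=.
- by case: y => ? [].
- by case: x => ? [].
- congr (_, _); congr op; apply: functional_extensionality_dep => i.
  exact: (f_equal fst (IHargs i)).
- by rewrite merge134_heart IH1 IH2 IH3 -merge134_heart.
- by rewrite merge134_box IH -merge134_box.
Qed.

Lemma in134_of_merge134_elt_eq (A : eqType) (u v : nat_elt A) :
  merge134_elt u = merge134_elt v -> u <> v -> in134 u.2.
Proof.
case: u v => [a m] [b n] [<-]; rewrite /merge134.
by case: m; case: n.
Qed.

Theorem lemma6p7 (A : eqType) (F : Type) (ar : F -> nat)
    (op : forall f : F, ('I_(ar f) -> A) -> A) (h : A -> A)
    (no_constants : forall f : F, 0 < ar f)
    (nontrivial : exists a b : A, a <> b)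
    (phi : term ar) (a : A) :
  eval op h phi (a, I1) (a, I3) <> eval op h phi (a, I1) (a, I1) ->
  in134 (eval op h phi (a, I1) (a, I3)).2.
Proof.
apply: in134_of_merge134_elt_eq.
by rewrite merge134_eval [RHS]merge134_eval.
Qed.
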